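(* Let $G=(V,E)$ be a finite simple graph and let $T\geq 1$ be an integer. If $(s,x,y,z)$ is a feasible solution of the Infection Model $\mathrm{IM}(G,T)$, then $C=\{v\in V\colon s_v=1\}$ is a zero forcing set of $G$ that is the initial set of some zero forcing game in $\mathcal{Z}(G,T)$, and $\mathrm{pt}(G,C)\leq z\leq T$.
   Context: Zero forcing: $n=|V|$, $N(u)$ is the neighborhood of $u$. Under the standard color change rule, a filled vertex $u$ can force a non-filled vertex $v$ if $v$ is the only non-filled neighbor of $u$. A zero forcing game on $G$ with initial set $C\subseteq V$ consists of sets $C^{(0)}=C^{[0]}=C$, sets $C^{(t)}$ (vertices forced at time step $t$) with $C^{[t]}=C^{[t-1]}\cup C^{(t)}$ for $t\geq1$, and a collection $\phi(C)$ of forces $u\to v$, such that every vertex lies in exactly one set $C^{(t)}$, and each $v\in C^{(t)}$ with $t\geq 1$ is forced by exactly one neighbor $u$ (recorded as $u\to v$ in $\phi(C)$) such that $u$ and all neighbors of $u$ other than $v$ lie in $C^{[t-1]}$. The closure of $C$ is the set of filled vertices once no more forces are possible; $C$ is a zero forcing set if its closure is $V$. The propagation time $\mathrm{pt}(G,C)$ is the smallest $t^*$ with $C^{[t^*]}=V$ when at each time step all possible forces are applied simultaneously (i.e. $C^{(t)}$ is the set of all $v\notin C^{[t-1]}$ for which some $u\in C^{[t-1]}$ has $v$ as its unique neighbor outside $C^{[t-1]}$), and $\mathrm{pt}(G,C)=\infty$ if $C$ is not a zero forcing set. $\mathcal{Z}(G,T)$ denotes the family of all zero forcing games on $G$ whose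 initial set is a zero forcing set and which use at most $T$ time steps. Infection Model: let $A$ be the set of arcs containing both $(u,v)$ and $(v,u)$ for each edge $\{u,v\}\in E$, and $[T]=\{1,\dots,T\}$. The model $\mathrm{IM}(G,T)$ has variables $s_v\in\{0,1\}$ and $x_v\in\{0,1,\dots,T\}$ for $v\in V$, $y_a\in\{0,1\}$ for $a\in A$, and $z\in\{0,1,\dots,T\}$, subject to: (i) $s_v+\sum_{a=(u,v)\in A}y_a=1$ for all $v\in V$; (ii) $x_u-x_v+(T+1)y_a\leq T$ for all $a=(u,v)\in A$; (iii) $x_w-x_v+(T+1)y_a\leq T$ for all $a=(u,v)\in A$ and $w\in N(u)\setminus\{v\}$; (iv) $x_v-z\leq 0$ for all $v\in V$. Its objective is to minimize $\sum_{v\in V}s_v$. A feasible solution is one satisfying all these constraints. *)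

From mathcomp Require Import all_boot.
From Stdlib Require Import ClassicalEpsilon.
Set Implicit Arguments. Unset Strict Implicit. Unset Printing Implicit Defensive.

Section ZF.
Variable V : finType.
Variable e : rel V.

Definition simple_graph : Prop := symmetric e /\ irreflexive e.

Definition zf_step (S : {set V}) : {set V} :=
  S :|: [set v | (v \notin S) &&
           [exists u, [&& u \in S, e u v &
              [forall w, (e u w && (w \notin S)) ==> (w == v)]]]].

Definition zf_filled (C : {set V}) (t : nat) : {set V} := iter t zf_step C.

Definition zero_forcing_set (C : {set V}) : Prop :=
  exists t, zf_filled C t = [set: V].

(* propagation time: Some (smallest t with C^[t] = V), None = infinity *)
Definition pt (C : {set V}) : option nat :=
  match excluded_middle_informative (exists t, zf_filled C t == [set: V]) with
  | left H => Some (ex_minn H)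
  | right _ => None
  end.

(* A zero forcing game with initial set C using at most T time steps,
   described by the time  tm v  (v \in C^(tm v)) and the forcer  f v
   (the force  f v -> v  in phi(C) for every v with tm v >= 1). *)
Definition zf_game (C : {set V}) (T : nat) (tm : V -> nat) (f : V -> V) : Prop :=
  [/\ forall v, (tm v == 0) = (v \in C),
      forall v, tm v <= T &
      forall v, 0 < tm v ->
        [/\ e (f v) v, tm (f v) < tm v &
            forall w, e (f v) w -> w != v -> tm w < tm v]].

Definition in_ZGT (C : {set V}) (T : nat) : Prop :=
  zero_forcing_set C /\ exists tm f, zf_game C T tm f.

(* Feasibility for IM(G,T).  s_v, y_a in {0,1} are booleans (coerced to nat);
   y is indexed by pairs, only pairs (u,v) with e u v (the arcs) matter.
   Integer constraints (ii)-(iv) are rearranged to avoid subtraction. *)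
Definition IM_feasible (T : nat) (s : V -> bool) (x : V -> nat)
    (y : V -> V -> bool) (z : nat) : Prop :=
  [/\ (forall v, x v <= T), z <= T,
      (forall v, s v + \sum_(u | e u v) y u v = 1) &
   [/\
      (forall u v, e u v -> x u + (T.+1) * y u v <= T + x v),
      (forall u v w, e u v -> e u w -> w != v -> x w + (T.+1) * y u v <= T + x v) &
      (forall v, x v <= z)]].

End ZF.

(* A feasible solution of the Infection Model is read as a zero forcing game:
   a vertex with s_v = 0 has exactly one incoming arc (u, v) with y_(u,v) = 1,
   and constraints (ii) and (iii) for that arc say that u and all its other
   neighbours are filled strictly before time x_v.  So u -> v is a legal force
   at time x_v, and every game whose times are bounded by t fills the whole
   graph within t rounds of simultaneous forcing, since simultaneous forcing
   fills each vertex no later than any particular game does. *)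
From mathcomp Require Import all_boot.
From mathcomp Require Import zify.
From Stdlib Require Import ClassicalEpsilon.

Set Implicit Arguments.
Unset Strict Implicit.
Unset Printing Implicit Defensive.

Section ZeroForcing.
Variable V : finType.
Variable e : rel V.

Lemma zf_step_sub (S : {set V}) : S \subset zf_step e S.
Proof. exact: subsetUl. Qed.

Lemma zf_filledS (C : {set V}) t : zf_filled e C t.+1 = zf_step e (zf_filled e C t).
Proof. exact: iterS. Qed.

Lemma zf_game_filled (C : {set V}) T tm f t v :
  zf_game e C T tm f -> tm v <= t -> v \in zf_filled e C t.
Proof.
case=> tm0 _ tm_force; elim: t v => [|t IH] v.
  by rewrite leqn0 => /eqP tmv0; rewrite -tm0 tmv0.
move=> tmv_le; rewrite zf_filledS.
have [vt|vNt] := boolP (v \in zf_filled e C t); first exact: subsetP (zf_step_sub _) v vt.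
have tmv : tm v = t.+1.
  by case: (ltnP t (tm v)) => [|tmv_le_t]; [lia | move: vNt; rewrite IH].
have [efv fv_lt others_lt] := tm_force v (ltac:(lia)).
rewrite inE; apply/orP; right; rewrite inE vNt /=.
apply/existsP; exists (f v); rewrite efv IH /=; last by lia.
apply/forallP => w; apply/implyP => /andP[efw wNt]; apply/negPn/negP => wv.
by move: wNt; rewrite IH //; have := others_lt w efw wv; lia.
Qed.

Lemma zf_game_filled_all (C : {set V}) T tm f t :
  zf_game e C T tm f -> (forall v, tm v <= t) -> zf_filled e C t = [set: V].
Proof.
by move=> game tm_le; apply/setP => v; rewrite inE (zf_game_filled game).
Qed.

Lemma pt_le (C : {set V}) t :
  zf_filled e C t = [set: V] -> exists2 p, pt e C = Some p & p <= t.
Proof.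
move=> filled; rewrite /pt; case: excluded_middle_informative => [ex|nex].
  by exists (ex_minn ex) => //; case: ex_minnP => p _ /(_ t); apply; apply/eqP.
by case: nex; exists t; apply/eqP.
Qed.

End ZeroForcing.

Section InfectionModel.
Variable V : finType.
Variable e : rel V.
Variables (T : nat) (s : V -> bool) (x : V -> nat) (y : V -> V -> bool).

Hypothesis x_le_T : forall v, x v <= T.
Hypothesis one_source : forall v, s v + \sum_(u | e u v) y u v = 1.
Hypothesis arc_time : forall u v, e u v -> x u + T.+1 * y u v <= T + x v.
Hypothesis arc_nbr_time :
  forall u v w, e u v -> e u w -> w != v -> x w + T.+1 * y u v <= T + x v.

Definition im_time (v : V) : nat := if s v then 0 else x v.

Definition im_forcer (v : V) : V := odflt v [pick u | e u v && y u v].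

Lemma im_forcer_arc v : ~~ s v -> e (im_forcer v) v && y (im_forcer v) v.
Proof.
move=> sNv; rewrite /im_forcer; case: pickP => [u //|no_arc].
have := one_source v; rewrite (negbTE sNv) big1 // => u euv.
by have := no_arc u; rewrite euv => /= ->.
Qed.

Lemma im_forcer_time_lt v : ~~ s v -> x (im_forcer v) < x v.
Proof.
move=> /im_forcer_arc /andP[efv yfv].
by have := arc_time efv; rewrite yfv muln1; lia.
Qed.

Lemma im_forcer_nbr_time_lt v w :
  ~~ s v -> e (im_forcer v) w -> w != v -> x w < x v.
Proof.
move=> sNv efw wv; have /andP[efv yfv] := im_forcer_arc sNv.
by have := arc_nbr_time efv efw wv; rewrite yfv muln1; lia.
Qed.

Lemma im_zf_game : zf_game e [set v | s v] T im_time im_forcer.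
Proof.
rewrite /im_time; split=> [v | v | v].
- rewrite inE; case: ifP => [//|/negbT sNv].
  by have := im_forcer_time_lt sNv; case: (x v).
- by case: (s v).
- case: ifP => [//|/negbT sNv _]; split.
  + by case/andP: (im_forcer_arc sNv).
  + by have := im_forcer_time_lt sNv; case: (s _); lia.
  + by move=> w efw wv; have := im_forcer_nbr_time_lt sNv efw wv; case: (s w); lia.
Qed.

End InfectionModel.

Theorem theorem3p1 (V : finType) (e : rel V) (T : nat)
    (s : V -> bool) (x : V -> nat) (y : V -> V -> bool) (z : nat) :
  simple_graph e -> 1 <= T ->
  IM_feasible e T s x y z ->
  let C := [set v | s v] in
  [/\ zero_forcing_set e C, in_ZGT e C T &
      exists p, [/\ pt e C = Some p, p <= z & z <= T]].
Proof.
move=> _ _ [x_le_T z_le_T one_source [arc_time arc_nbr_time x_le_z]] C.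
have game := im_zf_game x_le_T one_source arc_time arc_nbr_time.
have filled : zf_filled e C z = [set: V].
  by apply: (zf_game_filled_all game) => v; rewrite /im_time; case: (s v).
have zf : zero_forcing_set e C by exists z.
have [p ptC p_le_z] := pt_le filled.
split=> //; first by split=> //; exists (im_time s x), (im_forcer e y).
by exists p.
Qed.
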